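(* For all complex $q$ with $|q|<1$, $$\psi(q)\psi(q^7)=\psi(q^8)\varphi(q^{28})+q^6\varphi(q^4)\psi(q^{56})+q\psi(q^{16})\varphi(q^{56})+q^3\psi(q^4)\psi(q^{28})+q^{13}\varphi(q^8)\psi(q^{112}).$$
   Context: Ramanujan's theta functions are $\varphi(q)=\sum_{n=-\infty}^{\infty}q^{n^2}$ and $\psi(q)=\sum_{n=0}^{\infty}q^{n(n+1)/2}$ for $|q|<1$. *)

From Stdlib Require Import Reals.
From Coquelicot Require Import Coquelicot.
Open Scope C_scope.

(* Sum of a complex series, computed componentwise (real and imaginary parts);
   it equals the usual sum whenever the series converges. *)
Definition CSeries (a : nat -> C) : C :=
  (Series (fun n => Re (a n)), Series (fun n => Im (a n))).

(* Ramanujan's phi(q) = sum_{n in Z} q^(n^2), split as the terms n >= 0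
   plus the terms n = -(k+1), k >= 0 (for which n^2 = (k+1)^2). *)
Definition rphi (q : C) : C :=
  CSeries (fun n => q ^ (n * n)) + CSeries (fun k => q ^ (S k * S k)).

Definition rpsi (q : C) : C :=
  CSeries (fun n => q ^ (Nat.div (n * (n + 1)) 2)).

(* Both sides are sums of products of lacunary series, so it suffices to compare the
   coefficients of q^N. Writing x = 2m + 1 and y = 2n + 1, the coefficient on the left is the
   number r(8N + 8) of solutions of x^2 + 7y^2 = 8N + 8 in odd positive integers. On the right,
   the first two terms count the solutions m(N + 1) of x^2 + 7y^2 = N + 1 with x and y of
   opposite parity and the odd one positive, the third and fifth terms contribute m((N + 1)/2)
   when N is odd and nothing otherwise, and the fourth term contributes r(2N + 2). Since
   r(K) = 0 unless 8 divides K, everything follows from r(8J) = m(J) + r(4J). Both sides of the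
   latter are matched with the solutions of X^2 + 7Y^2 = 4J normalised by X + 7Y > 0 and
   X - Y ≡ 2 (mod 4): those with X, Y even halve to the solutions counted by m(J), and those
   with X, Y odd give the ones counted by r(4J) after taking absolute values. *)

From Stdlib Require Import Reals.
From Coquelicot Require Import Coquelicot.
Open Scope C_scope.
From Stdlib Require Import List ZArith Lia Lra.
Local Open Scope bool_scope.

Definition countb {A : Type} (P : A -> bool) (l : list A) : nat := length (filter P l).

Lemma countb_app {A : Type} (P : A -> bool) l1 l2 :
  countb P (l1 ++ l2) = (countb P l1 + countb P l2)%nat.
Proof. unfold countb. now rewrite filter_app, length_app. Qed.

Lemma countb_map {A B : Type} (f : A -> B) (P : B -> bool) l :
  countb P (map f l) = countb (fun x => P (f x)) l.
Proof.
  unfold countb. induction l as [|a l IH]; simpl; auto. destruct (P (f a)); simpl; auto.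
Qed.

Lemma countb_ext {A : Type} (P Q : A -> bool) l :
  (forall a, P a = Q a) -> countb P l = countb Q l.
Proof. intros H. unfold countb. now rewrite (filter_ext P Q H). Qed.

Lemma countb_false {A : Type} (P : A -> bool) l : (forall a, P a = false) -> countb P l = 0%nat.
Proof. intros H. unfold countb. induction l as [|a l IH]; simpl; rewrite ?H; auto. Qed.

Lemma countb_orb {A : Type} (P Q : A -> bool) l : (forall a, P a && Q a = false) ->
  countb (fun a => P a || Q a) l = (countb P l + countb Q l)%nat.
Proof.
  intros H. unfold countb. induction l as [|a l IH]; simpl; auto.
  specialize (H a). destruct (P a), (Q a); simpl in *; try discriminate; lia.
Qed.

Lemma countb_le_of_inj {A B : Type} (P : A -> bool) (Q : B -> bool) l1 l2
    (f : A -> B) (g : B -> A) :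
  NoDup l1 -> (forall b, Q b = true -> In b l2) ->
  (forall a, P a = true -> Q (f a) = true /\ g (f a) = a) ->
  (countb P l1 <= countb Q l2)%nat.
Proof.
  intros Hl1 Hl2 Hf. unfold countb. rewrite <- (length_map f).
  apply NoDup_incl_length.
  - apply NoDup_map_NoDup_ForallPairs; [|now apply NoDup_filter].
    intros a a' Ha Ha' E. apply filter_In in Ha, Ha'.
    rewrite <- (proj2 (Hf a (proj2 Ha))), <- (proj2 (Hf a' (proj2 Ha'))), E. reflexivity.
  - intros b Hb. apply in_map_iff in Hb as [a [<- Ha]]. apply filter_In in Ha.
    destruct (Hf a (proj2 Ha)) as [HQ _]. apply filter_In. auto.
Qed.

Lemma countb_bij {A B : Type} (P : A -> bool) (Q : B -> bool) l1 l2 (f : A -> B) (g : B -> A) :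
  NoDup l1 -> NoDup l2 ->
  (forall a, P a = true -> In a l1 /\ Q (f a) = true /\ g (f a) = a) ->
  (forall b, Q b = true -> In b l2 /\ P (g b) = true /\ f (g b) = b) ->
  countb P l1 = countb Q l2.
Proof.
  intros Hl1 Hl2 Hf Hg. apply Nat.le_antisymm.
  - apply countb_le_of_inj with f g; firstorder.
  - apply countb_le_of_inj with g f; firstorder.
Qed.

Lemma NoDup_list_prod {A B : Type} (l1 : list A) (l2 : list B) :
  NoDup l1 -> NoDup l2 -> NoDup (list_prod l1 l2).
Proof.
  intros Hl1 Hl2. induction Hl1 as [|a l1 Ha _ IH]; simpl; [constructor|].
  apply NoDup_app; auto.
  - apply NoDup_map_NoDup_ForallPairs; auto. intros b b' _ _ E. now injection E.
  - intros [x y] H1 H2. apply in_map_iff in H1 as [b [E _]]. injection E as <- _.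
    apply in_prod_iff in H2. tauto.
Qed.

Lemma list_prod_app_l {A B : Type} (l l' : list A) (l2 : list B) :
  list_prod (l ++ l') l2 = list_prod l l2 ++ list_prod l' l2.
Proof. induction l as [|a l IH]; simpl; [reflexivity|]. now rewrite IH, app_assoc. Qed.

Definition nat_box (K : nat) : list (nat * nat) := list_prod (seq 0 K) (seq 0 K).

Lemma NoDup_nat_box K : NoDup (nat_box K).
Proof. apply NoDup_list_prod; apply seq_NoDup. Qed.

Lemma in_nat_box K m n : (m < K)%nat -> (n < K)%nat -> In (m, n) (nat_box K).
Proof. intros. apply in_prod; apply in_seq; lia. Qed.

Definition Z_interval (B : nat) : list Z :=
  map (fun i => Z.of_nat i - Z.of_nat B)%Z (seq 0 (2 * B + 1)).

Definition Z_box (B : nat) : list (Z * Z) := list_prod (Z_interval B) (Z_interval B).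

Lemma NoDup_Z_box B : NoDup (Z_box B).
Proof.
  assert (NoDup (Z_interval B)).
  { apply NoDup_map_NoDup_ForallPairs; [|apply seq_NoDup]. intros i j _ _ E. lia. }
  now apply NoDup_list_prod.
Qed.

Lemma in_Z_box B x y : (Z.abs x <= Z.of_nat B)%Z -> (Z.abs y <= Z.of_nat B)%Z ->
  In (x, y) (Z_box B).
Proof.
  assert (Hinterval : forall t, (Z.abs t <= Z.of_nat B)%Z -> In t (Z_interval B)).
  { intros t Ht. apply in_map_iff. exists (Z.to_nat (t + Z.of_nat B)).
    split; [lia|]. apply in_seq. lia. }
  intros. apply in_prod; auto.
Qed.
(** * Representations by x^2 + 7 y^2 *)

Ltac unbool := repeat rewrite ?Bool.andb_true_iff, ?Bool.orb_true_iff, ?Bool.andb_false_iff,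
  ?Z.eqb_eq, ?Z.ltb_lt, ?Z.leb_le, ?Z.eqb_neq, ?Z.ltb_ge, ?Z.leb_gt in *.

Section BinaryForm.
Local Open Scope Z_scope.

Definition form (p : Z * Z) : Z := fst p * fst p + 7 * snd p * snd p.

Definition rep (K : Z) (P : Z * Z -> bool) : nat :=
  countb (fun p => P p && (form p =? K)) (Z_box (Z.to_nat K)).

Lemma in_Z_box_form p K : form p = K -> In p (Z_box (Z.to_nat K)).
Proof.
  destruct p as [x y]; unfold form; cbn [fst snd]; intros H.
  assert (Z.abs x <= x * x) by (destruct (Z.abs_spec x); nia).
  assert (Z.abs y <= y * y) by (destruct (Z.abs_spec y); nia).
  pose proof (Z.square_nonneg x); pose proof (Z.square_nonneg y).
  apply in_Z_box; rewrite Z2Nat.id; lia.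
Qed.

Lemma rep_bij K K' P P' (f g : Z * Z -> Z * Z) :
  (forall p, P p = true -> form p = K -> P' (f p) = true /\ form (f p) = K' /\ g (f p) = p) ->
  (forall p, P' p = true -> form p = K' -> P (g p) = true /\ form (g p) = K /\ f (g p) = p) ->
  rep K P = rep K' P'.
Proof.
  intros Hf Hg. apply countb_bij with f g; try apply NoDup_Z_box;
    intros p Hp; unbool; destruct Hp as [HP HK].
  - destruct (Hf p HP HK) as (? & ? & ?). unbool; auto using in_Z_box_form.
  - destruct (Hg p HP HK) as (? & ? & ?). unbool; auto using in_Z_box_form.
Qed.

Lemma rep_ext K P Q : (forall p, form p = K -> P p = Q p) -> rep K P = rep K Q.
Proof.
  intros H. apply countb_ext. intros p.
  destruct (Z.eqb_spec (form p) K) as [E|]; [now rewrite H | now rewrite !Bool.andb_false_r].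
Qed.

Lemma rep_orb K P Q : (forall p, P p && Q p = false) ->
  rep K (fun p => P p || Q p) = (rep K P + rep K Q)%nat.
Proof.
  intros H. unfold rep. rewrite <- countb_orb.
  - apply countb_ext. intros p. apply Bool.andb_orb_distrib_l.
  - intros p. specialize (H p). destruct (P p), (Q p), (form p =? K); auto.
Qed.

Definition odd_pos (x : Z) : bool := (x mod 2 =? 1) && (0 <? x).
Definition even_nonneg (x : Z) : bool := (x mod 2 =? 0) && (0 <=? x).
Definition even_neg (x : Z) : bool := (x mod 2 =? 0) && (x <? 0).

Definition rep_odd (K : Z) : nat := rep K (fun p => odd_pos (fst p) && odd_pos (snd p)).

Definition mixed (p : Z * Z) : bool :=
  odd_pos (fst p) && (snd p mod 2 =? 0) || (fst p mod 2 =? 0) && odd_pos (snd p).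

Definition rep_mixed (K : Z) : nat := rep K mixed.

Lemma odd_square_mod_8 x : x mod 2 = 1 -> (x * x) mod 8 = 1.
Proof.
  intros H. assert (exists q, x = 4 * q + 1 \/ x = 4 * q + 3) as [q [-> | ->]]
    by (exists (x / 4); Z.div_mod_to_equations; lia);
    Z.div_mod_to_equations; nia.
Qed.

Lemma rep_odd_zero K : K mod 8 <> 0 -> rep_odd K = 0%nat.
Proof.
  intros HK. apply countb_false. intros [x y]; unfold odd_pos, form; cbn [fst snd].
  apply Bool.not_true_iff_false. intros H; unbool.
  destruct H as [[[Hx _] [Hy _]] HK'].
  apply HK. rewrite <- HK'. replace (x * x + 7 * y * y) with (x * x + 7 * (y * y)) by ring.
  rewrite Z.add_mod, (Z.mul_mod 7), !odd_square_mod_8 by (auto || lia). reflexivity.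
Qed.

Definition normalized (p : Z * Z) : bool :=
  (0 <? fst p + 7 * snd p) && ((fst p - snd p) mod 4 =? 2).

(* For x, y odd, [halve_norm (x, y)] is X + Y √-7 = (x - y' √-7)(1 + √-7)/4, whose norm
   X^2 + 7Y^2 is half of x^2 + 7y^2; the sign of y' = ± y is chosen so that x ≡ y' (mod 4),
   which makes X and Y integers. *)
Definition halve_norm (p : Z * Z) : Z * Z :=
  let x := fst p in
  let y' := if (fst p - snd p) mod 4 =? 0 then snd p else - snd p in
  ((x + 7 * y') / 4, (x - y') / 4).

Definition double_norm (p : Z * Z) : Z * Z :=
  ((fst p + 7 * snd p) / 2, Z.abs ((fst p - snd p) / 2)).

Lemma rep_odd_8_normalized J : rep_odd (8 * J) = rep (4 * J) normalized.
Proof.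
  apply rep_bij with halve_norm double_norm.
  - intros [x y] Hp Hform. unfold odd_pos, form in *; cbn [fst snd] in *; unbool.
    destruct Hp as [[Hx Hx0] [Hy Hy0]].
    assert (Hsign : exists y', halve_norm (x, y) = ((x + 7 * y') / 4, (x - y') / 4)
                               /\ (x - y') mod 4 = 0 /\ (y' = y \/ y' = - y)).
    { unfold halve_norm; cbn [fst snd]. destruct (Z.eqb_spec ((x - y) mod 4) 0).
      - exists y. auto.
      - exists (- y). repeat split; auto. Z.div_mod_to_equations; lia. }
    destruct Hsign as (y' & -> & H4 & Hy'y).
    assert (Hy' : y' mod 2 = 1) by (Z.div_mod_to_equations; lia).
    assert (exists Y, x = 4 * Y + y') as [Y ->]
      by (exists ((x - y') / 4); Z.div_mod_to_equations; lia).
    rewrite <- (Z.div_unique_exact _ 4 (Y + 2 * y')), <- (Z.div_unique_exact _ 4 Y)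
      by (lia || ring).
    unfold normalized, double_norm; cbn [fst snd]; unbool.
    rewrite <- (Z.div_unique_exact _ 2 (4 * Y + y')), <- (Z.div_unique_exact _ 2 y')
      by (lia || ring).
    repeat split; [lia | Z.div_mod_to_equations; lia | destruct Hy'y; subst; nia | f_equal; lia].
  - intros [X Y] Hp Hform. unfold normalized, form in *; cbn [fst snd] in *; unbool.
    destruct Hp as [Hpos H2].
    assert (exists y', X = Y + 2 * y' /\ y' mod 2 = 1) as (y' & -> & Hy')
      by (exists ((X - Y) / 2); Z.div_mod_to_equations; lia).
    unfold double_norm, halve_norm, odd_pos; cbn [fst snd].
    rewrite <- (Z.div_unique_exact _ 2 (4 * Y + y')), <- (Z.div_unique_exact _ 2 y')
      by (lia || ring).
    destruct (Z.abs_spec y') as [[Hs ->] | [Hs ->]]; unbool.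
    + rewrite (proj2 (Z.eqb_eq _ _)) by (Z.div_mod_to_equations; lia).
      rewrite <- (Z.div_unique_exact _ 4 (Y + 2 * y')), <- (Z.div_unique_exact _ 4 Y)
        by (lia || ring).
      repeat split; try (Z.div_mod_to_equations; lia); nia.
    + rewrite (proj2 (Z.eqb_neq _ _)), Z.opp_involutive by (Z.div_mod_to_equations; lia).
      rewrite <- (Z.div_unique_exact _ 4 (Y + 2 * y')), <- (Z.div_unique_exact _ 4 Y)
        by (lia || ring).
      repeat split; try (Z.div_mod_to_equations; lia); nia.
Qed.

Definition neg (p : Z * Z) : Z * Z := (- fst p, - snd p).

(* If X - Y ≡ 2 (mod 4) then also X + 7Y ≡ 2 (mod 4), so X + 7Y ≠ 0 and exactly one of [p] and
   [neg p] is normalized. *)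
Definition orient (p : Z * Z) : Z * Z := if 0 <? fst p + 7 * snd p then p else neg p.

Definition orient_mixed (p : Z * Z) : Z * Z := if mixed p then p else neg p.

Lemma orient_normalized p : (fst p - snd p) mod 4 = 2 -> normalized (orient p) = true.
Proof.
  destruct p as [X Y]; unfold orient, normalized, neg; cbn [fst snd]; intros H.
  destruct (Z.ltb_spec 0 (X + 7 * Y)); cbn [fst snd]; unbool; split;
    Z.div_mod_to_equations; lia.
Qed.

Lemma orient_neg p : (fst p - snd p) mod 4 = 2 -> orient (neg p) = orient p.
Proof.
  destruct p as [X Y]; unfold orient, neg; cbn [fst snd]; intros H.
  assert (X + 7 * Y <> 0) by (Z.div_mod_to_equations; lia).
  destruct (Z.ltb_spec 0 (X + 7 * Y)), (Z.ltb_spec 0 (- X + 7 * - Y));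
    cbn [fst snd]; rewrite ?Z.opp_involutive; auto; lia.
Qed.

Lemma orient_id p : normalized p = true -> orient p = p.
Proof. unfold normalized, orient; intros H; unbool. now rewrite (proj2 (Z.ltb_lt _ _)). Qed.

Lemma mixed_neg p : (fst p - snd p) mod 2 = 1 -> mixed (neg p) = negb (mixed p).
Proof.
  destruct p as [u v]; unfold mixed, odd_pos, neg; cbn [fst snd]; intros H.
  assert (Hp : u <> 0 /\ u mod 2 = 1 /\ v mod 2 = 0 /\ (- u) mod 2 = 1 /\ (- v) mod 2 = 0 \/
               v <> 0 /\ u mod 2 = 0 /\ v mod 2 = 1 /\ (- u) mod 2 = 0 /\ (- v) mod 2 = 1)
    by (Z.div_mod_to_equations; lia).
  destruct Hp as [(? & -> & -> & -> & ->) | (? & -> & -> & -> & ->)]; cbn.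
  - destruct (Z.ltb_spec 0 u), (Z.ltb_spec 0 (- u)); auto; lia.
  - destruct (Z.ltb_spec 0 v), (Z.ltb_spec 0 (- v)); auto; lia.
Qed.

Lemma orient_mixed_id p : mixed p = true -> orient_mixed p = p.
Proof. unfold orient_mixed. now intros ->. Qed.

Lemma orient_mixed_mixed p : (fst p - snd p) mod 2 = 1 -> mixed (orient_mixed p) = true.
Proof.
  intros H. unfold orient_mixed. destruct (mixed p) eqn:E; auto. now rewrite mixed_neg, E.
Qed.

Lemma orient_mixed_neg p : (fst p - snd p) mod 2 = 1 -> orient_mixed (neg p) = orient_mixed p.
Proof.
  intros H. unfold orient_mixed. rewrite mixed_neg by exact H.
  destruct p as [u v]; unfold neg; cbn [fst snd]. rewrite !Z.opp_involutive.
  now destruct (mixed (u, v)).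
Qed.

Lemma orient_sign p : orient p = p \/ orient p = neg p.
Proof. unfold orient. destruct (0 <? fst p + 7 * snd p); auto. Qed.

Lemma orient_mixed_sign p : orient_mixed p = p \/ orient_mixed p = neg p.
Proof. unfold orient_mixed. destruct (mixed p); auto. Qed.

Lemma rep_normalized_even J :
  rep (4 * J) (fun p => normalized p && (fst p mod 2 =? 0)) = rep_mixed J.
Proof.
  apply rep_bij with (fun p => orient_mixed (fst p / 2, snd p / 2))
                     (fun p => orient (2 * fst p, 2 * snd p)).
  - intros [X Y] Hp Hform. unfold normalized in Hp; cbn [fst snd] in *; unbool.
    destruct Hp as [[Hpos H2] HX].
    assert (exists u v, X = 2 * u /\ Y = 2 * v) as (u & v & -> & ->)
      by (exists (X / 2), (Y / 2); Z.div_mod_to_equations; lia).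
    rewrite <- (Z.div_unique_exact _ 2 u), <- (Z.div_unique_exact _ 2 v) by (lia || ring).
    assert (Huv : (u - v) mod 2 = 1) by (Z.div_mod_to_equations; lia).
    assert (Hq : orient (2 * u, 2 * v) = (2 * u, 2 * v))
      by (apply orient_id; unfold normalized; cbn [fst snd]; unbool; auto).
    split; [now apply orient_mixed_mixed|].
    unfold form in Hform; cbn [fst snd] in Hform.
    destruct (orient_mixed_sign (u, v)) as [-> | ->]; split; auto;
      unfold form, neg in *; cbn [fst snd] in *; [nia | nia |].
    replace (2 * - u, 2 * - v) with (neg (2 * u, 2 * v))
      by (unfold neg; cbn [fst snd]; f_equal; ring).
    now rewrite orient_neg.
  - intros [u v] Hp Hform; cbn [fst snd].
    assert (Huv : (u - v) mod 2 = 1)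
      by (unfold mixed, odd_pos in Hp; cbn [fst snd] in Hp; unbool; Z.div_mod_to_equations; lia).
    assert (H2 : (fst (2 * u, 2 * v) - snd (2 * u, 2 * v)) mod 4 = 2)
      by (cbn [fst snd]; Z.div_mod_to_equations; lia).
    pose proof (orient_normalized _ H2) as Hn.
    unfold form in Hform; cbn [fst snd] in Hform.
    destruct (orient_sign (2 * u, 2 * v)) as [E | E]; rewrite E in *; unfold neg, form in *;
      cbn [fst snd] in *; rewrite Hn.
    + rewrite <- (Z.div_unique_exact _ 2 u), <- (Z.div_unique_exact _ 2 v), orient_mixed_id
        by (auto || lia || ring).
      repeat split; [unbool; Z.div_mod_to_equations; lia | nia].
    + rewrite <- (Z.div_unique_exact _ 2 (- u)), <- (Z.div_unique_exact _ 2 (- v)) by (lia || ring).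
      change (- u, - v) with (neg (u, v)). rewrite orient_mixed_neg, orient_mixed_id by auto.
      repeat split; [unbool; Z.div_mod_to_equations; lia | nia].
Qed.

Definition abs2 (p : Z * Z) : Z * Z := (Z.abs (fst p), Z.abs (snd p)).

Definition flip_to_normal (p : Z * Z) : Z * Z :=
  if (fst p - snd p) mod 4 =? 2 then p else (fst p, - snd p).

Lemma rep_normalized_odd J :
  rep (4 * J) (fun p => normalized p && (fst p mod 2 =? 1)) = rep_odd (4 * J).
Proof.
  apply rep_bij with abs2 (fun p => orient (flip_to_normal p)).
  - intros [X Y] Hp Hform. unfold normalized in Hp; cbn [fst snd] in Hp; unbool.
    destruct Hp as [[Hpos H2] HX].
    assert (HY : Y mod 2 = 1) by (Z.div_mod_to_equations; lia).
    assert (Hid : orient (X, Y) = (X, Y))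
      by (apply orient_id; unfold normalized; cbn [fst snd]; unbool; auto).
    unfold abs2, flip_to_normal, odd_pos, form in *; cbn [fst snd] in *.
    destruct (Z.abs_spec X) as [[Xs ->] | [Xs ->]], (Z.abs_spec Y) as [[Ys ->] | [Ys ->]].
    + rewrite (proj2 (Z.eqb_eq ((X - Y) mod 4) 2)) by auto.
      repeat split; unbool; try assumption; try (Z.div_mod_to_equations; lia); nia.
    + rewrite (proj2 (Z.eqb_neq ((X - - Y) mod 4) 2)), Z.opp_involutive
        by (Z.div_mod_to_equations; lia).
      repeat split; unbool; try assumption; try (Z.div_mod_to_equations; lia); nia.
    + rewrite (proj2 (Z.eqb_neq ((- X - Y) mod 4) 2)) by (Z.div_mod_to_equations; lia).
      change (- X, - Y) with (neg (X, Y)). rewrite orient_neg by auto.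
      repeat split; unbool; try assumption; try (Z.div_mod_to_equations; lia); nia.
    + rewrite (proj2 (Z.eqb_eq ((- X - - Y) mod 4) 2)) by (Z.div_mod_to_equations; lia).
      change (- X, - Y) with (neg (X, Y)). rewrite orient_neg by auto.
      repeat split; unbool; try assumption; try (Z.div_mod_to_equations; lia); nia.
  - intros [a b] Hp Hform. unfold odd_pos in Hp; cbn [fst snd] in Hp; unbool.
    destruct Hp as [[Ha Ha0] [Hb Hb0]].
    assert (Hc : exists c, flip_to_normal (a, b) = c /\ (fst c - snd c) mod 4 = 2 /\
                           (c = (a, b) \/ c = (a, - b))).
    { unfold flip_to_normal; cbn [fst snd]. destruct (Z.eqb_spec ((a - b) mod 4) 2).
      - eexists; eauto.
      - eexists; repeat split; eauto; cbn [fst snd]. Z.div_mod_to_equations; lia. }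
    destruct Hc as (c & -> & Hc2 & Hcab).
    pose proof (orient_normalized c Hc2) as Hn.
    destruct (orient_sign c) as [E | E]; rewrite E in Hn |- *; rewrite Hn;
      unfold form, abs2, neg in *; cbn [fst snd] in *;
      destruct Hcab as [-> | ->]; cbn [fst snd] in *;
      repeat split; unbool; try (Z.div_mod_to_equations; lia); try nia; f_equal; lia.
Qed.

Theorem rep_odd_8_mixed J : rep_odd (8 * J) = (rep_mixed J + rep_odd (4 * J))%nat.
Proof.
  rewrite rep_odd_8_normalized, <- rep_normalized_even, <- rep_normalized_odd, <- rep_orb.
  - apply rep_ext. intros p _.
    destruct (normalized p); cbn; auto. destruct (Z.eqb_spec (fst p mod 2) 0); auto.
    symmetry. apply Z.eqb_eq. Z.div_mod_to_equations; lia.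
  - intros p.
    destruct (normalized p), (Z.eqb_spec (fst p mod 2) 0), (Z.eqb_spec (fst p mod 2) 1); auto; lia.
Qed.

End BinaryForm.
(** * Coefficients of products of lacunary series *)

Section Coefficients.
Local Open Scope nat_scope.

Definition tri (n : nat) : nat := n * (n + 1) / 2.

Lemma double_tri n : 2 * tri n = n * (n + 1).
Proof.
  unfold tri. destruct (Nat.Even_or_Odd n) as [[k ->] | [k ->]].
  - replace (2 * k * (2 * k + 1)) with (k * (2 * k + 1) * 2) by lia.
    rewrite Nat.div_mul; lia.
  - replace ((2 * k + 1) * (2 * k + 1 + 1)) with ((2 * k + 1) * (k + 1) * 2) by lia.
    rewrite Nat.div_mul; lia.
Qed.

Lemma tri_Z n : (2 * Z.of_nat (tri n) = Z.of_nat n * (Z.of_nat n + 1))%Z.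
Proof. pose proof (double_tri n). lia. Qed.

Lemma le_tri n : n <= tri n.
Proof. pose proof (double_tri n). nia. Qed.

Definition coeff (c : nat) (g h : nat -> nat) (N : nat) : nat :=
  countb (fun p => c + g (fst p) + h (snd p) =? N) (nat_box (S N)).

Lemma coeff_box c g h N K : (forall m, m <= g m) -> (forall n, n <= h n) -> N < K ->
  coeff c g h N = countb (fun p => c + g (fst p) + h (snd p) =? N) (nat_box K).
Proof.
  intros Hg Hh HK. apply countb_bij with (fun p => p) (fun p => p); try apply NoDup_nat_box;
    intros [m n] Hp; apply Nat.eqb_eq in Hp as Hp'; cbn [fst snd] in Hp';
    specialize (Hg m); specialize (Hh n); repeat split; auto; apply in_nat_box; lia.
Qed.

Lemma coeff_ext c g h N c' g' h' N' :
  (forall m, m <= g m) -> (forall n, n <= h n) -> (forall m, m <= g' m) -> (forall n, n <= h' n) ->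
  (forall m n, c + g m + h n = N <-> c' + g' m + h' n = N') ->
  coeff c g h N = coeff c' g' h' N'.
Proof.
  intros Hg Hh Hg' Hh' E. apply countb_bij with (fun p => p) (fun p => p); try apply NoDup_nat_box;
    intros [m n] Hp; apply Nat.eqb_eq in Hp as Hp'; cbn [fst snd] in *;
    specialize (Hg m); specialize (Hh n); specialize (Hg' m); specialize (Hh' n);
    repeat split; try (apply in_nat_box; lia); apply Nat.eqb_eq, E, Hp'.
Qed.

Lemma coeff_double c g h g2 h2 K : (forall m, m <= g m) -> (forall n, n <= h n) ->
  (forall m, g2 m = 2 * g m) -> (forall n, h2 n = 2 * h n) ->
  coeff (2 * c + 1) g2 h2 (2 * K + 1) = coeff c g h K.
Proof.
  intros Hg Hh E2 F2. symmetry. apply coeff_ext; auto.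
  - intros m. specialize (Hg m). rewrite E2. lia.
  - intros n. specialize (Hh n). rewrite F2. lia.
  - intros m n. rewrite E2, F2. lia.
Qed.

Lemma coeff_zero c g h N : (forall m n, c + g m + h n <> N) -> coeff c g h N = 0.
Proof. intros H. apply countb_false. intros [m n]. apply Nat.eqb_neq, H. Qed.

End Coefficients.

Section Encodings.
Local Open Scope Z_scope.

Definition enumerates (u : nat -> Z) (u' : Z -> nat) (U : Z -> bool) : Prop :=
  (forall m, U (u m) = true /\ u' (u m) = m) /\ (forall x, U x = true -> u (u' x) = x).

Lemma enumerates_odd_pos :
  enumerates (fun m => 2 * Z.of_nat m + 1) (fun x => Z.to_nat (x / 2)) odd_pos.
Proof.
  unfold odd_pos; split; [intros m | intros x Hx]; unbool; Z.div_mod_to_equations; lia.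
Qed.

Lemma enumerates_even_nonneg :
  enumerates (fun m => 2 * Z.of_nat m) (fun x => Z.to_nat (x / 2)) even_nonneg.
Proof.
  unfold even_nonneg; split; [intros m | intros x Hx]; unbool; Z.div_mod_to_equations; lia.
Qed.

Lemma enumerates_even_neg :
  enumerates (fun m => - (2 * Z.of_nat m + 2)) (fun x => Z.to_nat (- x / 2 - 1)) even_neg.
Proof.
  unfold even_neg; split; [intros m | intros x Hx]; unbool; Z.div_mod_to_equations; lia.
Qed.

Lemma coeff_rep c g h N K u u' U v v' V :
  (forall m, (m <= g m)%nat) -> (forall n, (n <= h n)%nat) ->
  enumerates u u' U -> enumerates v v' V ->
  (forall m n, (c + g m + h n)%nat = N <-> form (u m, v n) = K) ->
  coeff c g h N = rep K (fun p => U (fst p) && V (snd p)).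
Proof.
  intros Hg Hh [Hu Hu'] [Hv Hv'] E.
  apply countb_bij with (fun p => (u (fst p), v (snd p))) (fun p => (u' (fst p), v' (snd p)));
    try apply NoDup_nat_box; try apply NoDup_Z_box.
  - intros [m n] Hp; apply Nat.eqb_eq in Hp; cbn [fst snd] in *.
    destruct (Hu m) as [Um ->], (Hv n) as [Vn ->]. specialize (Hg m); specialize (Hh n).
    repeat split; [apply in_nat_box; lia |]. rewrite Um, Vn. apply Z.eqb_eq, E, Hp.
  - intros [x y] Hp; unbool; destruct Hp as [[Ux Vy] Hxy]; cbn [fst snd] in *.
    rewrite (Hu' x Ux), (Hv' y Vy). repeat split; auto using in_Z_box_form.
    apply Nat.eqb_eq, E. now rewrite (Hu' x Ux), (Hv' y Vy).
Qed.

End Encodings.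

Ltac growth := intros k; cbv beta; pose proof (le_tri k); nia.

Ltac solve_coeff_rep :=
  [> growth | growth
  | intros m n; unfold form; cbn [fst snd]; pose proof (tri_Z m); pose proof (tri_Z n); nia].

Lemma coeff_psi_psi7 N : coeff 0 tri (fun n => 7 * tri n)%nat N = rep_odd (8 * Z.of_nat N + 8).
Proof.
  apply coeff_rep with (3 := enumerates_odd_pos) (4 := enumerates_odd_pos); solve_coeff_rep.
Qed.

Lemma coeff_q3_psi4_psi28 N :
  coeff 3 (fun m => 4 * tri m)%nat (fun n => 28 * tri n)%nat N = rep_odd (2 * Z.of_nat N + 2).
Proof.
  apply coeff_rep with (3 := enumerates_odd_pos) (4 := enumerates_odd_pos); solve_coeff_rep.
Qed.

Lemma even_split t : (t mod 2 =? 0)%Z = even_nonneg t || even_neg t.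
Proof.
  unfold even_nonneg, even_neg.
  destruct (t mod 2 =? 0)%Z, (Z.leb_spec 0 t), (Z.ltb_spec t 0); auto; lia.
Qed.

Ltac disjoint_parities := intros [x y]; unfold odd_pos, even_nonneg, even_neg; cbn [fst snd];
  apply Bool.not_true_iff_false; intros H; unbool; Z.div_mod_to_equations; lia.

(* An even coordinate is either 2n or -2(n + 1) with n ≥ 0, matching the split of [rphi] into
   the terms of index n ≥ 0 and those of index -(n + 1). *)
Lemma rep_mixed_coeff N :
  rep_mixed (Z.of_nat N + 1) =
    (coeff 0 (fun m => 8 * tri m) (fun n => 28 * (n * n)) N
   + coeff 0 (fun m => 8 * tri m) (fun n => 28 * (S n * S n)) N
   + coeff 6 (fun m => 4 * (m * m)) (fun n => 56 * tri n) N
   + coeff 6 (fun m => 4 * (S m * S m)) (fun n => 56 * tri n) N)%nat.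
Proof.
  transitivity (rep (Z.of_nat N + 1) (fun p =>
    odd_pos (fst p) && even_nonneg (snd p) || odd_pos (fst p) && even_neg (snd p)
    || even_nonneg (fst p) && odd_pos (snd p) || even_neg (fst p) && odd_pos (snd p))).
  { apply rep_ext. intros [x y] _. unfold mixed; cbn [fst snd]. rewrite !even_split.
    destruct (odd_pos x), (odd_pos y), (even_nonneg x), (even_neg x), (even_nonneg y), (even_neg y);
      reflexivity. }
  rewrite !rep_orb by disjoint_parities.
  repeat f_equal; symmetry.
  - apply coeff_rep with (3 := enumerates_odd_pos) (4 := enumerates_even_nonneg); solve_coeff_rep.
  - apply coeff_rep with (3 := enumerates_odd_pos) (4 := enumerates_even_neg); solve_coeff_rep.
  - apply coeff_rep with (3 := enumerates_even_nonneg) (4 := enumerates_odd_pos); solve_coeff_rep.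
  - apply coeff_rep with (3 := enumerates_even_neg) (4 := enumerates_odd_pos); solve_coeff_rep.
Qed.

Theorem coeff_identity N :
  coeff 0 tri (fun n => 7 * tri n)%nat N =
   (coeff 0 (fun m => 8 * tri m) (fun n => 28 * (n * n)) N
  + coeff 0 (fun m => 8 * tri m) (fun n => 28 * (S n * S n)) N
  + coeff 6 (fun m => 4 * (m * m)) (fun n => 56 * tri n) N
  + coeff 6 (fun m => 4 * (S m * S m)) (fun n => 56 * tri n) N
  + coeff 1 (fun m => 16 * tri m) (fun n => 56 * (n * n)) N
  + coeff 1 (fun m => 16 * tri m) (fun n => 56 * (S n * S n)) N
  + coeff 3 (fun m => 4 * tri m) (fun n => 28 * tri n) N
  + coeff 13 (fun m => 8 * (m * m)) (fun n => 112 * tri n) N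
  + coeff 13 (fun m => 8 * (S m * S m)) (fun n => 112 * tri n) N)%nat.
Proof.
  rewrite coeff_psi_psi7, coeff_q3_psi4_psi28.
  replace (8 * Z.of_nat N + 8)%Z with (8 * (Z.of_nat N + 1))%Z by lia.
  rewrite rep_odd_8_mixed, rep_mixed_coeff.
  destruct (Nat.Even_or_Odd N) as [[K ->] | [K ->]].
  - rewrite !(coeff_zero 1), !(coeff_zero 13) by (intros; lia).
    rewrite !rep_odd_zero by (Z.div_mod_to_equations; lia).
    lia.
  - replace (4 * (Z.of_nat (2 * K + 1) + 1))%Z with (8 * (Z.of_nat K + 1))%Z by lia.
    replace (2 * Z.of_nat (2 * K + 1) + 2)%Z with (4 * (Z.of_nat K + 1))%Z by lia.
    rewrite rep_odd_8_mixed, rep_mixed_coeff.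
    rewrite (coeff_double 0 (fun m => 8 * tri m)%nat (fun n => 28 * (n * n))%nat),
      (coeff_double 0 (fun m => 8 * tri m)%nat (fun n => 28 * (S n * S n))%nat),
      (coeff_double 6 (fun m => 4 * (m * m))%nat (fun n => 56 * tri n)%nat),
      (coeff_double 6 (fun m => 4 * (S m * S m))%nat (fun n => 56 * tri n)%nat)
      by growth.
    lia.
Qed.

(** * Convergence *)

(* Coquelicot states these for an abstract ring or monoid; restated with equality at type [C]
   (or [R]), they can be used by [rewrite] and [ring] on concrete sums. *)
Lemma Csum_Sn (a : nat -> C) n : sum_n a (S n) = sum_n a n + a (S n).
Proof. exact (sum_Sn a n). Qed.

Lemma Csum_ext (a b : nat -> C) n : (forall k, a k = b k) -> @eq C (sum_n a n) (sum_n b n).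
Proof. apply sum_n_ext. Qed.

Lemma Csum_mult_l (a : C) (u : nat -> C) n :
  @eq C (a * sum_n u n) (sum_n (fun k => a * u k) n).
Proof. symmetry. exact (sum_n_mult_l a u n). Qed.

Lemma Csum_mult_r (a : C) (u : nat -> C) n :
  @eq C (sum_n u n * a) (sum_n (fun k => u k * a) n).
Proof. symmetry. exact (sum_n_mult_r a u n). Qed.

Lemma Csum_plus (u v : nat -> C) n :
  @eq C (sum_n (fun k => u k + v k) n) (sum_n u n + sum_n v n).
Proof. exact (sum_n_plus u v n). Qed.

Lemma Rsum_ext (a b : nat -> R) n : (forall k, a k = b k) -> @eq R (sum_n a n) (sum_n b n).
Proof. apply sum_n_ext. Qed.

Lemma Rsum_mult_l (a : R) (u : nat -> R) n : sum_n (fun k => a * u k)%R n = (a * sum_n u n)%R.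
Proof. exact (sum_n_mult_l a u n). Qed.

Lemma Rsum_mult_r (a : R) (u : nat -> R) n : sum_n (fun k => u k * a)%R n = (sum_n u n * a)%R.
Proof. exact (sum_n_mult_r a u n). Qed.

Lemma is_series_nat_coeff_ext (a b : nat -> nat) (q L : C) : (forall N, a N = b N) ->
  is_series (fun N => RtoC (INR (b N)) * q ^ N) L ->
  is_series (fun N => RtoC (INR (a N)) * q ^ N) L.
Proof. intros E. apply is_series_ext. intros N. now rewrite E. Qed.

Lemma is_series_nat_coeff_plus (a b : nat -> nat) (q La Lb : C) :
  is_series (fun N => RtoC (INR (a N)) * q ^ N) La ->
  is_series (fun N => RtoC (INR (b N)) * q ^ N) Lb ->
  is_series (fun N => RtoC (INR (a N + b N)) * q ^ N) (La + Lb).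
Proof.
  intros Ha Hb. eapply is_series_ext; [| exact (is_series_plus _ _ _ _ Ha Hb)].
  intros N. cbv beta. rewrite plus_INR, RtoC_plus. symmetry. apply Cmult_plus_distr_r.
Qed.

Lemma sum_n_Re (a : nat -> C) N : sum_n (fun n => Re (a n)) N = Re (sum_n a N).
Proof. induction N as [|N IH]; [reflexivity|]. now rewrite !sum_Sn, IH. Qed.

Lemma sum_n_Im (a : nat -> C) N : sum_n (fun n => Im (a n)) N = Im (sum_n a N).
Proof. induction N as [|N IH]; [reflexivity|]. now rewrite !sum_Sn, IH. Qed.

Lemma CSeries_unique a l : is_series a l -> CSeries a = l.
Proof.
  intros H. destruct l as [x y]. unfold CSeries. f_equal; apply is_series_unique.
  - apply (filterlim_ext (fun N => Re (sum_n a N))); [intros; symmetry; apply sum_n_Re|].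
    eapply filterlim_comp; [exact H|]. apply filterlim_locally. intros eps.
    exists eps. now intros [u v] [Hu _].
  - apply (filterlim_ext (fun N => Im (sum_n a N))); [intros; symmetry; apply sum_n_Im|].
    eapply filterlim_comp; [exact H|]. apply filterlim_locally. intros eps.
    exists eps. now intros [u v] [_ Hv].
Qed.

Lemma CSeries_correct a : ex_series a -> is_series a (CSeries a).
Proof. intros [l Hl]. now rewrite (CSeries_unique a l Hl). Qed.

Lemma CSeries_ext (a b : nat -> C) : (forall n, a n = b n) -> CSeries a = CSeries b.
Proof. intros H. unfold CSeries. f_equal; apply Series_ext; intros n; now rewrite H. Qed.

Lemma pow_antimono (x : R) m n : (0 <= x <= 1)%R -> (m <= n)%nat -> (x ^ n <= x ^ m)%R.
Proof.
  intros Hx Hmn. replace n with (m + (n - m))%nat by lia. rewrite pow_add.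
  assert (x ^ (n - m) <= 1)%R by (rewrite <- (pow1 (n - m)); apply pow_incr; lra).
  pose proof (pow_le x m (proj1 Hx)). nra.
Qed.

Lemma ex_series_pow (z : C) (g : nat -> nat) :
  (Cmod z < 1)%R -> (forall m, (m <= g m)%nat) -> ex_series (fun m => z ^ g m).
Proof.
  intros Hz Hg. apply (@ex_series_le C_AbsRing C_CompleteNormedModule _ (fun m => Cmod z ^ m)%R).
  - intros m. change norm with Cmod. rewrite Cmod_pow. pose proof (Cmod_ge_0 z).
    apply pow_antimono; auto. lra.
  - apply ex_series_geom. rewrite Rabs_pos_eq by apply Cmod_ge_0. exact Hz.
Qed.

(* Coquelicot gives C two uniform structures, the product one and that of the absolute-value
   ring [C_AbsRing] (for which [filterlim_mult] is stated); they have the same neighbourhoods. *)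
Lemma filterlim_locally_C {T} (F : (T -> Prop) -> Prop) (f : T -> C) (l : C) :
  filterlim f F (@locally C_UniformSpace l) <->
  filterlim f F (@locally (AbsRing_UniformSpace C_AbsRing) l).
Proof. split; intros H P HP; apply H; now apply locally_C. Qed.

Definition iverson (b : bool) : C := if b then 1 else 0.

Lemma INR_countb_seq (Q : nat -> bool) K :
  RtoC (INR (countb Q (seq 0 (S K)))) = sum_n (fun n => iverson (Q n)) K.
Proof.
  induction K as [|K IH].
  - rewrite sum_O. unfold countb, iverson; simpl. destruct (Q 0%nat); reflexivity.
  - rewrite seq_S, countb_app, plus_INR, RtoC_plus, IH, sum_Sn.
    unfold countb, iverson; cbn [filter Nat.add]. destruct (Q (S K)); reflexivity.
Qed.

Lemma INR_countb_nat_box (P : nat * nat -> bool) K :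
  RtoC (INR (countb P (nat_box (S K)))) =
  sum_n (fun m => sum_n (fun n => iverson (P (m, n))) K) K.
Proof.
  assert (Hprod : forall l2, RtoC (INR (countb P (list_prod (seq 0 (S K)) l2))) =
                             sum_n (fun m => RtoC (INR (countb (fun n => P (m, n)) l2))) K).
  { induction K as [|K IH]; intros l2.
    - rewrite sum_O. simpl list_prod. now rewrite app_nil_r, countb_map.
    - rewrite seq_S, list_prod_app_l, countb_app, plus_INR, RtoC_plus, IH, sum_Sn.
      simpl list_prod. now rewrite app_nil_r, countb_map. }
  unfold nat_box. rewrite Hprod. apply sum_n_ext. intros m. apply INR_countb_seq.
Qed.

Lemma sum_n_iverson_pow (w : C) (E K : nat) :
  @eq C (sum_n (fun N => iverson (Nat.eqb E N) * w ^ N) K) (iverson (Nat.leb E K) * w ^ E).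
Proof.
  unfold iverson. induction K as [|K IH].
  - rewrite sum_O. destruct E; simpl; ring.
  - rewrite Csum_Sn, IH. destruct (Nat.eqb_spec E (S K)) as [-> | NE].
    + rewrite (proj2 (Nat.leb_nle (S K) K)), Nat.leb_refl by lia. ring.
    + destruct (Nat.leb_spec E K), (Nat.leb_spec E (S K)); try lia; ring.
Qed.

Lemma Cmod_sum_n (a : nat -> C) n : (Cmod (sum_n a n) <= sum_n (fun k => Cmod (a k)) n)%R.
Proof.
  induction n as [|n IH]; rewrite ?sum_O; [lra|].
  rewrite Csum_Sn, sum_Sn. eapply Rle_trans; [apply Cmod_triangle|]. apply Rplus_le_compat_r, IH.
Qed.

Lemma sum_n_geom_le (s : R) K : (0 <= s < 1)%R -> (sum_n (fun m => s ^ m) K <= / (1 - s))%R.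
Proof.
  intros Hs. rewrite sum_n_Reals, tech3 by lra.
  pose proof (pow_le s (S K) (proj1 Hs)).
  apply Rmult_le_reg_r with (1 - s)%R; [lra|]. field_simplify; lra.
Qed.

Section ProductSeries.
Variables (z : C) (c : nat) (g h : nat -> nat).
Hypotheses (Hz : (Cmod z < 1)%R) (Hg : forall m, (m <= g m)%nat) (Hh : forall n, (n <= h n)%nat).

Lemma sum_n_coeff K :
  @eq C (sum_n (fun N => RtoC (INR (coeff c g h N)) * z ^ N) K)
    (sum_n (fun m => sum_n (fun n =>
       iverson (Nat.leb (c + g m + h n) K) * z ^ (c + g m + h n)) K) K).
Proof.
  transitivity (sum_n (fun N => sum_n (fun m => sum_n (fun n =>
    iverson (Nat.eqb (c + g m + h n) N) * z ^ N) K) K) K).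
  { apply sum_n_ext_loc. intros N HN.
    rewrite (coeff_box c g h N (S K)), INR_countb_nat_box, Csum_mult_r by (auto || lia).
    apply Csum_ext. intros m. now rewrite Csum_mult_r. }
  rewrite sum_n_switch. apply Csum_ext. intros m.
  rewrite sum_n_switch. apply Csum_ext. intros n.
  rewrite sum_n_iverson_pow. reflexivity.
Qed.

Lemma sum_n_product K :
  @eq C (z ^ c * sum_n (fun m => z ^ g m) K * sum_n (fun n => z ^ h n) K)
    (sum_n (fun m => sum_n (fun n => z ^ (c + g m + h n)) K) K).
Proof.
  rewrite (Csum_mult_l (z ^ c)), Csum_mult_r. apply Csum_ext. intros m.
  rewrite Csum_mult_l. apply Csum_ext. intros n. rewrite !Cpow_add_r. ring.
Qed.

Lemma sum_n_product_split K :
  @eq C (z ^ c * sum_n (fun m => z ^ g m) K * sum_n (fun n => z ^ h n) K)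
    (sum_n (fun N => RtoC (INR (coeff c g h N)) * z ^ N) K
     + sum_n (fun m => sum_n (fun n =>
         iverson (Nat.ltb K (c + g m + h n)) * z ^ (c + g m + h n)) K) K).
Proof.
  rewrite sum_n_product, sum_n_coeff, <- Csum_plus. apply Csum_ext. intros m.
  rewrite <- Csum_plus. apply Csum_ext. intros n. unfold iverson.
  destruct (Nat.leb_spec (c + g m + h n) K), (Nat.ltb_spec K (c + g m + h n)); try lia; ring.
Qed.

(* A term of the tail has exponent e = c + g m + h n with e > K and e >= m + n, so with
   s = √|z| it is bounded by s^e s^e <= s^K s^m s^n. *)
Let s := sqrt (Cmod z).

Lemma s_bounds : (0 <= s < 1)%R /\ (s * s = Cmod z)%R.
Proof.
  pose proof (Cmod_ge_0 z). unfold s. split; [split | apply sqrt_sqrt; lra].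
  - apply sqrt_pos.
  - rewrite <- sqrt_1. apply sqrt_lt_1; lra.
Qed.

Lemma tail_term_bound K m n :
  (Cmod (iverson (Nat.ltb K (c + g m + h n)) * z ^ (c + g m + h n))
   <= s ^ K * (s ^ m * s ^ n))%R.
Proof.
  destruct s_bounds as [Hs Hss]. unfold iverson.
  pose proof (pow_le s K (proj1 Hs)); pose proof (pow_le s m (proj1 Hs));
    pose proof (pow_le s n (proj1 Hs)).
  destruct (Nat.ltb_spec K (c + g m + h n)).
  - rewrite Cmult_1_l, Cmod_pow, <- Hss, Rpow_mult_distr, <- (pow_add s m n).
    specialize (Hg m); specialize (Hh n).
    apply Rmult_le_compat; try apply pow_le; try apply pow_antimono; lra || lia.
  - rewrite Cmult_0_l, Cmod_0. apply Rmult_le_pos; [|apply Rmult_le_pos]; assumption.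
Qed.

Lemma tail_bound K :
  (Cmod (sum_n (fun m => sum_n (fun n =>
     iverson (Nat.ltb K (c + g m + h n)) * z ^ (c + g m + h n))%C K) K)
   <= s ^ K * (/ (1 - s) * / (1 - s)))%R.
Proof.
  destruct s_bounds as [Hs _].
  pose proof (sum_n_geom_le s K Hs) as Hgeom.
  assert (0 <= sum_n (fun m => s ^ m) K)%R.
  { rewrite sum_n_Reals. apply cond_pos_sum. intros; apply pow_le; lra. }
  apply Rle_trans with (sum_n (fun m => sum_n (fun n => s ^ K * (s ^ m * s ^ n)) K) K)%R.
  { eapply Rle_trans; [apply Cmod_sum_n|]. apply sum_n_m_le. intros m.
    eapply Rle_trans; [apply Cmod_sum_n|]. apply sum_n_m_le. intros n. apply tail_term_bound. }
  rewrite (Rsum_ext _ (fun m => s ^ K * s ^ m * sum_n (fun n => s ^ n) K)%R).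
  2: { intros m. rewrite <- Rsum_mult_l. apply Rsum_ext. intros n. ring. }
  rewrite Rsum_mult_r, Rsum_mult_l, Rmult_assoc.
  apply Rmult_le_compat_l; [apply pow_le; lra|]. apply Rmult_le_compat; assumption.
Qed.

Lemma tail_lim :
  filterlim (fun K => sum_n (fun m => sum_n (fun n =>
     iverson (Nat.ltb K (c + g m + h n)) * z ^ (c + g m + h n)) K) K)
    Hierarchy.eventually (locally (0 : C)).
Proof.
  destruct s_bounds as [Hs _]. apply (filterlim_norm_zero (V := C_NormedModule)).
  apply (is_lim_seq_le_le (fun _ => 0%R) _ (fun K => s ^ K * (/ (1 - s) * / (1 - s)))%R 0%R).
  - intros K. split; [apply norm_ge_0 | apply tail_bound].
  - apply is_lim_seq_const.
  - replace (Finite 0) with (Rbar_mult 0 (/ (1 - s) * / (1 - s))%R) by (simpl; f_equal; ring).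
    apply is_lim_seq_scal_r, is_lim_seq_geom. rewrite Rabs_pos_eq; lra.
Qed.

Lemma is_lim_partial_product :
  filterlim (fun K => z ^ c * sum_n (fun m => z ^ g m) K * sum_n (fun n => z ^ h n) K)
    Hierarchy.eventually
    (locally (z ^ c * CSeries (fun m => z ^ g m) * CSeries (fun n => z ^ h n))).
Proof.
  pose proof (CSeries_correct _ (ex_series_pow z g Hz Hg)) as HA.
  pose proof (CSeries_correct _ (ex_series_pow z h Hz Hh)) as HB.
  apply filterlim_locally_C in HA, HB. apply filterlim_locally_C.
  set (A := CSeries (fun m => z ^ g m)) in *. set (B := CSeries (fun n => z ^ h n)) in *.
  refine (filterlim_comp_2 _ _ Cmult _ HB (filterlim_mult (K := C_AbsRing) (z ^ c * A) B)).
  exact (filterlim_comp_2 _ _ Cmult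
           (@filterlim_const _ (AbsRing_UniformSpace C_AbsRing) _ _ (z ^ c))
           HA (filterlim_mult (K := C_AbsRing) (z ^ c) A)).
Qed.

Theorem is_series_coeff :
  is_series (fun N => RtoC (INR (coeff c g h N)) * z ^ N)
    (z ^ c * CSeries (fun m => z ^ g m) * CSeries (fun n => z ^ h n)).
Proof.
  apply filterlim_locally_ball_norm. intros eps.
  generalize (filter_and _ _
    (proj1 (filterlim_locally_ball_norm _ _) is_lim_partial_product (pos_div_2 eps))
    (proj1 (filterlim_locally_ball_norm _ _) tail_lim (pos_div_2 eps))).
  apply filter_imp. intros K [HP HT]. unfold ball_norm in *.
  set (L := z ^ c * CSeries (fun m => z ^ g m) * CSeries (fun n => z ^ h n)) in *.
  set (P := z ^ c * sum_n (fun m => z ^ g m) K * sum_n (fun n => z ^ h n) K) in *.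
  set (T := sum_n (fun m => sum_n (fun n =>
              iverson (Nat.ltb K (c + g m + h n)) * z ^ (c + g m + h n)) K) K) in *.
  change (Cmod (P - L) < eps / 2)%R in HP. change (Cmod (T - 0) < eps / 2)%R in HT.
  change (Rlt (Cmod (sum_n (fun N => RtoC (INR (coeff c g h N)) * z ^ N) K - L)) eps).
  replace (sum_n (fun N => RtoC (INR (coeff c g h N)) * z ^ N) K - L) with ((P - L) + - (T - 0))
    by (unfold P, T; rewrite sum_n_product_split; ring).
  eapply Rle_lt_trans; [apply Cmod_triangle|]. rewrite Cmod_opp. lra.
Qed.

End ProductSeries.

Lemma rpsi_pow (q : C) k : rpsi (q ^ k) = CSeries (fun n => q ^ (k * tri n)).
Proof. apply CSeries_ext. intros n. symmetry. apply Cpow_mult_r. Qed.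

Lemma rphi_pow (q : C) k :
  rphi (q ^ k) = CSeries (fun n => q ^ (k * (n * n))) + CSeries (fun n => q ^ (k * (S n * S n))).
Proof. unfold rphi. f_equal; apply CSeries_ext; intros n; symmetry; apply Cpow_mult_r. Qed.

Theorem lemma5p1 (q : C) (hq : (Cmod q < 1)%R) :
  rpsi q * rpsi (q ^ 7) =
    rpsi (q ^ 8) * rphi (q ^ 28)
  + q ^ 6 * rphi (q ^ 4) * rpsi (q ^ 56)
  + q * rpsi (q ^ 16) * rphi (q ^ 56)
  + q ^ 3 * rpsi (q ^ 4) * rpsi (q ^ 28)
  + q ^ 13 * rphi (q ^ 8) * rpsi (q ^ 112).
Proof.
  assert (Hser : forall c g h L, (forall m, (m <= g m)%nat) -> (forall n, (n <= h n)%nat) ->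
      L = q ^ c * CSeries (fun m => q ^ g m) * CSeries (fun n => q ^ h n) ->
      is_series (fun N => RtoC (INR (coeff c g h N)) * q ^ N) L)
    by (intros c g h L Hg Hh ->; now apply is_series_coeff).
  transitivity (CSeries (fun N => RtoC (INR (coeff 0 tri (fun n => 7 * tri n)%nat N)) * q ^ N)).
  { symmetry. apply CSeries_unique, Hser; try growth.
    change (rpsi q) with (CSeries (fun n => q ^ tri n)). rewrite rpsi_pow. ring. }
  apply CSeries_unique, (is_series_nat_coeff_ext _ _ _ _ coeff_identity).
  rewrite !rpsi_pow, !rphi_pow, !Cmult_plus_distr_l, !Cmult_plus_distr_r, !Cplus_assoc.
  do 8 (apply is_series_nat_coeff_plus; [| apply Hser; try growth; ring]).
  apply Hser; try growth; ring.
Qed.
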